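(* Identify $\mathbb{C}^4$ with $\mathbb{R}^8$. Let $\omega=e^{2\pi i/3}$, $\mathcal{E}=\mathbb{Z}[\omega]$, and $\theta=\omega-\bar\omega$. For a finite set $S\subset\mathbb{C}^4$ let $\langle S\rangle_{\mathcal E}$ denote the set of $\mathcal{E}$-linear combinations of elements of $S$. Define six sets of four vectors: $S_1=\{(\theta,0,0,0),(0,\theta,0,0),(0,0,\theta,0),(0,0,0,\theta)\}$; $S_2=\{(0,1,-1,1),(1,0,-1,-1),(1,-1,0,1),(1,1,1,0)\}$; $S_3=\{(0,1,-1,\omega),(1,0,-\omega,-\bar\omega),(1,-\omega,0,\bar\omega),(1,\omega,\omega,0)\}$; $S_4=\{(0,1,-\omega,\omega),(1,0,-\omega,-\omega),(1,-1,0,\omega),(1,1,\omega,0)\}$; $S_5=\{(0,1,-\omega,\bar\omega),(1,0,-\bar\omega,-1),(1,-\omega,0,1),(1,\omega,\bar\omega,0)\}$; $S_6=\{(0,1,-\omega,1),(1,0,-1,-\bar\omega),(1,-\bar\omega,0,\bar\omega),(1,\bar\omega,1,0)\}$; and for $j=3,4,5,6$ let $S_{j+4}=\overline{S_j}$ be obtained by complex-conjugating every coordinate. Let $\Lambda_k=\langle S_k\rangle_{\mathcal E}$ for $k=1,\dots,10$ (each a copy of $\mathcal{E}^4\cong A_2^4$). Then $$\Lambda_1\cap\cdots\cap\Lambda_{10}=\Lambda_1\cap\Lambda_2=\langle \theta(\theta,0,0,0),\ \theta(0,\theta,0,0),\ \theta(1,1,1,0),\ \theta(0,1,-1,1)\rangle_{\mathcal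 E},$$ and this lattice is a copy of the $E_8$ lattice.
   Context: $\mathcal{E}=\{a+b\omega:a,b\in\mathbb{Z}\}$ is the ring of Eisenstein integers; regarded as a real 2-dimensional lattice it is similar to the hexagonal lattice $A_2$. $E_8$ is the 8-dimensional root lattice (up to similarity). *)

(* complex numbers are modelled by algC (algebraic complex numbers);
   all vectors involved have algebraic coordinates. *)
From HB Require Import structures.
From mathcomp Require Import all_boot all_order all_algebra all_field.
Set Implicit Arguments. Unset Strict Implicit. Unset Printing Implicit Defensive.
Import Order.TTheory GRing.Theory Num.Theory.
Local Open Scope ring_scope.

(* omega = e^{2 pi i/3} = (-1 + i sqrt 3)/2 *)
Definition omega : algC := (-1 + 'i * sqrtC 3%:R) / 2%:R.
Definition omegab : algC := omega^*.
Definition theta : algC := omega - omegab.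

Definition is_eis (z : algC) : Prop :=
  exists a b : int, z = a%:~R + b%:~R * omega.

Definition vec4 (a b c d : algC) : 'rV[algC]_4 :=
  \row_(i < 4) nth 0 [:: a; b; c; d] i.

Definition espan (s : 'I_4 -> 'rV[algC]_4) (v : 'rV[algC]_4) : Prop :=
  exists c : 'I_4 -> algC, (forall i, is_eis (c i)) /\ v = \sum_(i < 4) c i *: s i.

Definition fam4 (a b c d : 'rV[algC]_4) : 'I_4 -> 'rV[algC]_4 :=
  fun i => nth 0 [:: a; b; c; d] i.

Definition w := omega.
Definition wb := omegab.

Definition S1 := fam4 (vec4 theta 0 0 0) (vec4 0 theta 0 0) (vec4 0 0 theta 0) (vec4 0 0 0 theta).
Definition S2 := fam4 (vec4 0 1 (-1) 1) (vec4 1 0 (-1) (-1)) (vec4 1 (-1) 0 1) (vec4 1 1 1 0).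
Definition S3 := fam4 (vec4 0 1 (-1) w) (vec4 1 0 (-w) (-wb)) (vec4 1 (-w) 0 wb) (vec4 1 w w 0).
Definition S4 := fam4 (vec4 0 1 (-w) w) (vec4 1 0 (-w) (-w)) (vec4 1 (-1) 0 w) (vec4 1 1 w 0).
Definition S5 := fam4 (vec4 0 1 (-w) wb) (vec4 1 0 (-wb) (-1)) (vec4 1 (-w) 0 1) (vec4 1 w wb 0).
Definition S6 := fam4 (vec4 0 1 (-w) 1) (vec4 1 0 (-1) (-wb)) (vec4 1 (-wb) 0 wb) (vec4 1 wb 1 0).

Definition conjS (s : 'I_4 -> 'rV[algC]_4) : 'I_4 -> 'rV[algC]_4 :=
  fun i => map_mx (fun z : algC => z^*) (s i).

Definition S (k : nat) : 'I_4 -> 'rV[algC]_4 :=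
  match k with
  | 1 => S1 | 2 => S2 | 3 => S3 | 4 => S4 | 5 => S5 | 6 => S6
  | 7 => conjS S3 | 8 => conjS S4 | 9 => conjS S5 | _ => conjS S6
  end.

Definition Lam (k : nat) : 'rV[algC]_4 -> Prop := espan (S k).

Definition T := fam4 (theta *: vec4 theta 0 0 0) (theta *: vec4 0 theta 0 0)
                     (theta *: vec4 1 1 1 0) (theta *: vec4 0 1 (-1) 1).

(* identification C^4 = R^8 : (z_1,..,z_4) |-> (Re z_1, Im z_1, ..., Re z_4, Im z_4);
   R^8 is represented by real-valued rows of algC *)
Definition toR8 (v : 'rV[algC]_4) : 'rV[algC]_8 :=
  \row_(j < 8) (if odd j then 'Im (v 0 (inord j./2)) else 'Re (v 0 (inord j./2))).

Definition E8 (x : 'rV[algC]_8) : Prop :=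
  (exists z : 'I_8 -> int,
      x = \row_(i < 8) (z i)%:~R \/ x = \row_(i < 8) ((z i)%:~R + 2%:R^-1))
  /\ exists m : int, \sum_(i < 8) x 0 i = (2 * m)%:~R.

(* L (a subset of C^4 = R^8) is similar to E8: there is a real similarity
   M (M M^T = c I, c > 0) of R^8 mapping L onto E8 *)
Definition similar_to_E8 (L : 'rV[algC]_4 -> Prop) : Prop :=
  exists (M : 'M[algC]_8) (c : algC),
    (forall i j, M i j \is Num.real) /\ 0 < c /\ M *m M^T = c%:M /\
    (forall y, E8 y <-> exists v, L v /\ y = toR8 v *m M).

(* Write Eisenstein integers as [eis a b = a + b ω]; membership in each
   [Λ_k] is then a system of integer linear equations.  Every vector of [T] lies
   in every [Λ_k]: explicit coordinates are given for [k <= 6], and for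
   [k = j + 4] it follows from [k = j] because complex conjugation fixes each
   vector of [T] up to sign.  Conversely, comparing the coordinates of a vector
   of [Λ_1 ∩ Λ_2] in the two bases solves for its coordinates in [T].
   For [E8], let [M = diag(1, 1/√3, ..., 1, 1/√3) Q / 3] with [Q] an integer
   matrix such that [Q Q^T = diag(2, 6, ..., 2, 6)], so that [M M^T = 2/9].
   The factor [1/√3] cancels the [√3/2] in the imaginary part of [eis a b], so
   [M] maps the real coordinates of [⟨T⟩] to explicit rational vectors, and a
   direct computation identifies their set with the standard [E8]: the parity
   of one coordinate decides between the integral and half-integral cosets. *)

From mathcomp Require Import all_boot all_order all_algebra all_field.
From mathcomp Require Import ring zify.
Set Implicit Arguments. Unset Strict Implicit. Unset Printing Implicit Defensive.
Import Order.TTheory GRing.Theory Num.Theory.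
Local Open Scope ring_scope.

Lemma sqrtC3_neq0 : sqrtC (3%:R : algC) != 0.
Proof. by rewrite sqrtC_eq0 pnatr_eq0. Qed.

Lemma sqrtC3_real : sqrtC (3%:R : algC) \is Num.real.
Proof. by apply: sqrtC_real; rewrite ler0n. Qed.

Ltac fld := field; rewrite ?pnatr_eq0 ?sqrtC3_neq0 //.

Lemma omega_sqr : omega * omega = - 1 - omega.
Proof.
have i_sqrt3_sqr : ('i * sqrtC 3%:R) ^+ 2 = - 3%:R :> algC.
  by rewrite exprMn sqrCi sqrtCK mulN1r.
transitivity ((('i * sqrtC 3%:R) ^+ 2 + 3%:R) / 4%:R - omega - 1 : algC).
  by rewrite /omega; fld.
by rewrite i_sqrt3_sqr; fld.
Qed.

Lemma conj_omega : omega^* = - 1 - omega.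
Proof.
rewrite /omega rmorphM rmorphD rmorphN rmorph1 rmorphM /= conjCi fmorphV /= conjC_nat.
by rewrite (conj_Creal sqrtC3_real); fld.
Qed.

Definition eis (a b : int) : algC := a%:~R + b%:~R * omega.

Lemma eisD a b c d : eis a b + eis c d = eis (a + c) (b + d).
Proof. by rewrite /eis !intrD; ring. Qed.

Lemma eisN a b : - eis a b = eis (- a) (- b).
Proof. by rewrite /eis !intrN; ring. Qed.

Lemma eisB a b c d : eis a b - eis c d = eis (a - c) (b - d).
Proof. by rewrite eisN eisD. Qed.

Lemma eisM a b c d : eis a b * eis c d = eis (a * c - b * d) (a * d + b * c - b * d).
Proof.
rewrite /eis !(intrD, intrB, intrM).
transitivity (a%:~R * c%:~R + (a%:~R * d%:~R + b%:~R * c%:~R) * omega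
              + b%:~R * d%:~R * (omega * omega) : algC); first by ring.
by rewrite omega_sqr; ring.
Qed.

Lemma conj_eis a b : (eis a b)^* = eis (a - b) (- b).
Proof.
by rewrite /eis rmorphD rmorphM /= !(conj_Creal (realz _ _)) conj_omega !(intrB, intrN); ring.
Qed.

Lemma eis_inj a b c d : eis a b = eis c d -> a = c /\ b = d.
Proof.
move/eqP; rewrite -subr_eq0 eisB => /eqP; set u := a - c; set v := b - d => uv0.
have norm_uv : ((u ^+ 2 - u * v + v ^+ 2)%:~R : algC) = 0.
  transitivity ((eis u v)^* * eis u v); last by rewrite uv0 mulr0.
  rewrite conj_eis eisM /eis; rewrite !(intrD, intrB, intrM, intrN).
  by rewrite ?expr2; ring.
move/eqP: norm_uv; rewrite intr_eq0 => /eqP norm_uv.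
have [u0 v0] : u = 0 /\ v = 0 by nia.
by move: u0 v0; rewrite /u /v; split; lia.
Qed.

Lemma theta_eisE : theta = eis 1 2.
Proof. by rewrite /theta /omegab conj_omega /eis; ring. Qed.

Lemma omega_eisE : omega = eis 0 1.
Proof. by rewrite /eis; ring. Qed.

Lemma omegab_eisE : omegab = eis (-1) (-1).
Proof. by rewrite /omegab conj_omega /eis; ring. Qed.

Lemma eis00 : eis 0 0 = 0.
Proof. by rewrite /eis; ring. Qed.

Lemma eis10 : eis 1 0 = 1.
Proof. by rewrite /eis; ring. Qed.

Lemma Re_eis a b : 'Re (eis a b) = a%:~R - b%:~R / 2%:R.
Proof. by rewrite ReE conj_eis /eis /omega !(intrB, intrN); fld. Qed.

Lemma Im_eis a b : 'Im (eis a b) = b%:~R * sqrtC 3%:R / 2%:R.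
Proof.
rewrite ImE conj_eis /eis /omega !(intrB, intrN).
transitivity (- ('i ^+ 2) * b%:~R * sqrtC 3%:R / 2%:R :> algC); first by fld.
by rewrite sqrCi; ring.
Qed.

Lemma is_eis_eis a b : is_eis (eis a b).
Proof. by exists a, b. Qed.

Lemma is_eisP z : is_eis z -> exists a b, z = eis a b.
Proof. by []. Qed.

Lemma is_eisD x y : is_eis x -> is_eis y -> is_eis (x + y).
Proof.
by move=> [a [b ->]] [c [d ->]]; rewrite -/(eis a b) -/(eis c d) eisD; apply: is_eis_eis.
Qed.

Lemma is_eisM x y : is_eis x -> is_eis y -> is_eis (x * y).
Proof.
by move=> [a [b ->]] [c [d ->]]; rewrite -/(eis a b) -/(eis c d) eisM; apply: is_eis_eis.
Qed.

Lemma is_eis_conj x : is_eis x -> is_eis x^*.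
Proof. by move=> [a [b ->]]; rewrite -/(eis a b) conj_eis; apply: is_eis_eis. Qed.

Lemma vec4Z (k a b c d : algC) : k *: vec4 a b c d = vec4 (k * a) (k * b) (k * c) (k * d).
Proof. by apply/rowP => i; rewrite !mxE; case: i => [[|[|[|[|]]]]]. Qed.

Lemma vec4D (a b c d a' b' c' d' : algC) :
  vec4 a b c d + vec4 a' b' c' d' = vec4 (a + a') (b + b') (c + c') (d + d').
Proof. by apply/rowP => i; rewrite !mxE; case: i => [[|[|[|[|]]]]]. Qed.

Lemma vec4_inj (a b c d a' b' c' d' : algC) :
  vec4 a b c d = vec4 a' b' c' d' -> [/\ a = a', b = b', c = c' & d = d'].
Proof.
move=> eq_v; have coord i := congr1 (fun v : 'rV_4 => v 0 i) eq_v.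
move: (coord 0) (coord (inord 1)) (coord (inord 2)) (coord (inord 3)).
by rewrite !mxE !inordK.
Qed.

Lemma map_vec4 (f : algC -> algC) (a b c d : algC) :
  map_mx f (vec4 a b c d) = vec4 (f a) (f b) (f c) (f d).
Proof. by apply/rowP => i; rewrite !mxE; case: i => [[|[|[|[|]]]]]. Qed.

Section Span.

Variable s : 'I_4 -> 'rV[algC]_4.

Lemma espan0 : espan s 0.
Proof.
exists (fun=> 0); split=> [_|]; first by rewrite -eis00; apply: is_eis_eis.
by rewrite big1 // => i _; rewrite scale0r.
Qed.

Lemma espanD x y : espan s x -> espan s y -> espan s (x + y).
Proof.
move=> [c [Ec ->]] [c' [Ec' ->]]; exists (fun i => c i + c' i); split.
  by move=> i; apply: is_eisD.
by rewrite -big_split; apply: eq_bigr => i _; rewrite scalerDl.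
Qed.

Lemma espanZ k x : is_eis k -> espan s x -> espan s (k *: x).
Proof.
move=> Ek [c [Ec ->]]; exists (fun i => k * c i); split.
  by move=> i; apply: is_eisM.
by rewrite scaler_sumr; apply: eq_bigr => i _; rewrite scalerA.
Qed.

Lemma espan_conj v : espan s v -> espan (conjS s) (map_mx (fun z => z^*) v).
Proof.
move=> [c [Ec ->]]; exists (fun i => (c i)^*); split.
  by move=> i; apply: is_eis_conj.
by rewrite map_mx_sum; apply: eq_bigr => i _; rewrite map_mxZ.
Qed.

End Span.

Lemma espan_trans s s' v : (forall i, espan s' (s i)) -> espan s v -> espan s' v.
Proof.
move=> s_s' [c [Ec ->]]; apply: (big_ind (espan s')).
- exact: espan0.
- exact: espanD.
- by move=> i _; apply: espanZ.
Qed.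

Lemma espan_fam4 a b c d v :
  espan (fam4 a b c d) v <->
  exists c0 c1 c2 c3, [/\ is_eis c0, is_eis c1, is_eis c2, is_eis c3 &
     v = c0 *: a + c1 *: b + c2 *: c + c3 *: d].
Proof.
split=> [[k [Ek ->]]|[c0 [c1 [c2 [c3 [E0 E1 E2 E3 ->]]]]]].
  rewrite !big_ord_recl big_ord0 addr0 !addrA.
  by do 4 eexists; split; [apply: Ek | apply: Ek | apply: Ek | apply: Ek | reflexivity].
exists (fun i : 'I_4 => nth 0 [:: c0; c1; c2; c3] i); split.
  by case=> [[|[|[|[|]]]]].
by rewrite !big_ord_recl big_ord0 addr0 /fam4 !addrA.
Qed.

Ltac eis_coords :=
  rewrite /w /wb ?theta_eisE ?omegab_eisE ?omega_eisE -?eis00 -?eis10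
          ?(vec4Z, vec4D) ?(eisM, eisD, eisN, eisB, conj_eis).

Ltac eis_vec4_eq := congr vec4; congr eis; lia.

Tactic Notation "espan_by" uconstr(a0) uconstr(b0) uconstr(a1) uconstr(b1)
    uconstr(a2) uconstr(b2) uconstr(a3) uconstr(b3) :=
  apply/espan_fam4;
  exists (eis a0 b0), (eis a1 b1), (eis a2 b2), (eis a3 b3);
  split; try apply: is_eis_eis;
  eis_coords; eis_vec4_eq.

Lemma T_in_Lam1 i : Lam 1 (T i).
Proof.
rewrite /Lam /S /S1 /T /fam4; case: i => [[|[|[|[|]]]]] // _ /=.
- by espan_by 1 2  0 0  0 0  0 0.
- by espan_by 0 0  1 2  0 0  0 0.
- by espan_by 1 0  1 0  1 0  0 0.
- by espan_by 0 0  1 0  (-1) 0  1 0.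
Qed.

Lemma T_in_Lam2 i : Lam 2 (T i).
Proof.
rewrite /Lam /S /S2 /T /fam4; case: i => [[|[|[|[|]]]]] // _ /=.
- by espan_by 0 0  (-1) 0  (-1) 0  (-1) 0.
- by espan_by (-1) 0  0 0  1 0  (-1) 0.
- by espan_by 0 0  0 0  0 0  1 2.
- by espan_by 1 2  0 0  0 0  0 0.
Qed.

Lemma T_in_Lam3 i : Lam 3 (T i).
Proof.
rewrite /Lam /S /S3 /T /fam4; case: i => [[|[|[|[|]]]]] // _ /=.
- by espan_by 0 0  (-1) 0  (-1) 0  (-1) 0.
- by espan_by (-1) 0  0 0  (-1) (-1)  1 1.
- by espan_by 0 0  0 1  0 1  1 0.
- by espan_by 1 1  1 0  (-1) 0  0 0.
Qed.

Lemma T_in_Lam4 i : Lam 4 (T i).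
Proof.
rewrite /Lam /S /S4 /T /fam4; case: i => [[|[|[|[|]]]]] // _ /=.
- by espan_by 0 0  (-1) 0  (-1) 0  (-1) 0.
- by espan_by (-1) 0  0 0  1 0  (-1) 0.
- by espan_by 0 1  0 1  0 0  1 1.
- by espan_by 1 0  0 0  0 (-1)  0 1.
Qed.

Lemma T_in_Lam5 i : Lam 5 (T i).
Proof.
rewrite /Lam /S /S5 /T /fam4; case: i => [[|[|[|[|]]]]] // _ /=.
- by espan_by 0 0  (-1) 0  (-1) 0  (-1) 0.
- by espan_by (-1) 0  0 0  (-1) (-1)  1 1.
- by espan_by 0 1  1 1  0 1  0 0.
- by espan_by 0 0  (-1) (-1)  0 1  1 0.
Qed.

Lemma T_in_Lam6 i : Lam 6 (T i).
Proof.
rewrite /Lam /S /S6 /T /fam4; case: i => [[|[|[|[|]]]]] // _ /=.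
- by espan_by 0 0  (-1) 0  (-1) 0  (-1) 0.
- by espan_by (-1) 0  0 0  0 1  0 (-1).
- by espan_by 0 1  0 0  1 1  0 1.
- by espan_by 1 1  1 1  0 0  (-1) (-1).
Qed.

Lemma conj_T i : map_mx (fun z => z^*) (T i) = (if (i < 2)%N then 1 else -1) *: T i.
Proof.
rewrite /T /fam4; case: i => [[|[|[|[|]]]]] // _ /=; rewrite vec4Z map_vec4.
all: by eis_coords; eis_vec4_eq.
Qed.

Lemma T_in_conjS s i : espan s (T i) -> espan (conjS s) (T i).
Proof.
move=> /espan_conj; rewrite conj_T; case: ifP => _; first by rewrite scale1r.
have Eopp1 : is_eis (-1) by rewrite -eis10 eisN; apply: is_eis_eis.
by move/(espanZ Eopp1); rewrite scalerA mulrNN mulr1 scale1r.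
Qed.

Lemma T_in_Lam k : (1 <= k <= 10)%N -> forall i, Lam k (T i).
Proof.
case: k => [|[|[|[|[|[|[|[|[|[|[|k]]]]]]]]]]] // _ i.
- exact: T_in_Lam1.
- exact: T_in_Lam2.
- exact: T_in_Lam3.
- exact: T_in_Lam4.
- exact: T_in_Lam5.
- exact: T_in_Lam6.
- exact: T_in_conjS (T_in_Lam3 i).
- exact: T_in_conjS (T_in_Lam4 i).
- exact: T_in_conjS (T_in_Lam5 i).
- exact: T_in_conjS (T_in_Lam6 i).
Qed.

Lemma Lam1_Lam2_espanT v : Lam 1 v -> Lam 2 v -> espan T v.
Proof.
rewrite /Lam /S /S1 /S2 => /espan_fam4 [c0 [c1 [c2 [c3 [E0 E1 E2 E3 ->]]]]].
move=> /espan_fam4 [d0 [d1 [d2 [d3 [F0 F1 F2 F3]]]]].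
case/is_eisP: E0 => a0 [b0 ->]; case/is_eisP: E1 => a1 [b1 ->].
case/is_eisP: E2 => a2 [b2 ->]; case/is_eisP: E3 => a3 [b3 ->].
case/is_eisP: F0 => p0 [q0 ->]; case/is_eisP: F1 => p1 [q1 ->].
case/is_eisP: F2 => p2 [q2 ->]; case/is_eisP: F3 => p3 [q3 ->].
eis_coords => /vec4_inj [/eis_inj [? ?] /eis_inj [? ?] /eis_inj [? ?] /eis_inj [? ?]].
apply/espan_fam4; rewrite /T /fam4.
exists (eis (- p1) (- q1)), (eis (p2 - p1) (q2 - q1)),
       (eis (a0 + p1 - 2 * q1) (b0 + 2 * p1 - q1)), (eis a3 b3).
by split; try apply: is_eis_eis; eis_coords; eis_vec4_eq.
Qed.

Definition row8 (x0 x1 x2 x3 x4 x5 x6 x7 : algC) : 'rV[algC]_8 :=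
  \row_(i < 8) nth 0 [:: x0; x1; x2; x3; x4; x5; x6; x7] i.

Lemma row8_eta (F : 'I_8 -> algC) : \row_i F i =
  row8 (F (inord 0)) (F (inord 1)) (F (inord 2)) (F (inord 3))
       (F (inord 4)) (F (inord 5)) (F (inord 6)) (F (inord 7)).
Proof.
apply/rowP => i; rewrite !mxE; case: i => [[|[|[|[|[|[|[|[|]]]]]]]]] // lt_i8 /=;
  by congr F; apply: val_inj; rewrite /= inordK.
Qed.

Lemma sum_row8 x0 x1 x2 x3 x4 x5 x6 x7 :
  \sum_(i < 8) row8 x0 x1 x2 x3 x4 x5 x6 x7 0 i = x0 + x1 + x2 + x3 + x4 + x5 + x6 + x7.
Proof. by rewrite !big_ord_recr big_ord0 /= !mxE /=; ring. Qed.

Lemma E8P y : E8 y <->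
  exists h z0 z1 z2 z3 z4 z5 z6 z7 m : int, [/\ h = 0 \/ h = 1,
    y = row8 (z0%:~R + h%:~R / 2%:R) (z1%:~R + h%:~R / 2%:R) (z2%:~R + h%:~R / 2%:R)
             (z3%:~R + h%:~R / 2%:R) (z4%:~R + h%:~R / 2%:R) (z5%:~R + h%:~R / 2%:R)
             (z6%:~R + h%:~R / 2%:R) (z7%:~R + h%:~R / 2%:R) &
    z0 + z1 + z2 + z3 + z4 + z5 + z6 + z7 + 4 * h = 2 * m].
Proof.
split=> [[[z [y_int | y_half]] [m sum_y]]|].
- rewrite row8_eta in y_int; rewrite y_int sum_row8 in sum_y.
  exists 0; do 8 eexists; exists m; split; [by left | | ].
    by rewrite y_int; congr row8; rewrite mul0r addr0.
  by apply/eqP; rewrite -(eqr_int algC) -sum_y; apply/eqP; ring.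
- rewrite row8_eta in y_half; rewrite y_half sum_row8 in sum_y.
  exists 1; do 8 eexists; exists m; split; [by right | | ].
    by rewrite y_half; congr row8; rewrite mul1r.
  by apply/eqP; rewrite -(eqr_int algC) -sum_y; apply/eqP; fld.
case=> h [z0 [z1 [z2 [z3 [z4 [z5 [z6 [z7 [m [h01 -> sum_z]]]]]]]]]]; split.
  exists (fun i => nth 0 [:: z0; z1; z2; z3; z4; z5; z6; z7] i).
  by case: h01 => ->; [left | right]; rewrite row8_eta !inordK //; congr row8 => /=; fld.
by exists m; rewrite sum_row8 -sum_z; fld.
Qed.

Lemma int_even_odd (q : int) : exists t h : int, (h = 0 \/ h = 1) /\ q = 2 * t + h.
Proof.
exists (q %/ 2)%Z, (q %% 2)%Z.
have := divz_eq q 2; have := modz_ge0 q (isT : 2 != 0 :> int).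
have := ltz_pmod q (isT : 0 < 2 :> int); lia.
Qed.

Definition Q8 (i j : nat) : int :=
  nth 0 (nth [::]
    [:: [:: -1; -1; 0; 0; 0; 0; 0; 0];
        [:: 1; -1; -2; 0; 0; 0; 0; 0];
        [:: 0; 0; 0; -1; -1; 0; 0; 0];
        [:: 0; 0; 0; 1; -1; -2; 0; 0];
        [:: 0; 0; 0; 0; 0; 0; -1; -1];
        [:: -1; 1; -1; -1; 1; -1; 0; 0];
        [:: 0; 0; 0; 0; 0; 0; 1; -1];
        [:: -1; 1; -1; 1; -1; 1; 0; 0]] i) j.

Lemma Q8_mul_tr (i j : nat) : (i < 8)%N -> (j < 8)%N ->
  \sum_(k < 8) Q8 i k * Q8 j k = if i == j then (if odd i then 6 else 2) else 0.
Proof.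
rewrite !big_ord_recr big_ord0 /=.
by move: i j => [|[|[|[|[|[|[|[|i]]]]]]]] [|[|[|[|[|[|[|[|j]]]]]]]].
Qed.

Definition M_E8 : 'M[algC]_8 :=
  \matrix_(i < 8, j < 8) ((if odd i then (sqrtC 3%:R)^-1 else 1) * (Q8 i j)%:~R / 3%:R).

Lemma M_E8_real i j : M_E8 i j \is Num.real.
Proof.
by rewrite mxE; case: (odd i); rewrite ?mul1r ?realM ?rpredV ?realz ?realn ?sqrtC3_real.
Qed.

Lemma M_E8_mul_tr : M_E8 *m M_E8^T = (2%:R / 9%:R)%:M.
Proof.
apply/matrixP => i j; rewrite !mxE.
set d := fun k : 'I_8 => if odd k then (sqrtC 3%:R)^-1 else 1 : algC.
transitivity (d i * d j / 9%:R *
              (if i == j :> nat then (if odd i then 6 else 2) else 0 : int)%:~R).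
  rewrite -(Q8_mul_tr (ltn_ord i) (ltn_ord j)) rmorph_sum mulr_sumr.
  apply: eq_bigr => k _; rewrite !mxE rmorphM /d /=.
  by set a := (if odd i then _ else _); set b := (if odd j then _ else _); fld.
case: (eqVneq i j) => [<-|neq_ij]; last first.
  by rewrite (negPf (neq_ij : val i != val j)) mulr0.
rewrite !eqxx mulr1n /d; case: (odd i); last by fld.
by rewrite -expr2 exprVn sqrtCK; fld.
Qed.

Definition E8_coords (a1 b1 a2 b2 a3 b3 a4 b4 : int) : 'rV[algC]_8 :=
  row8 ((- 2 * a1 + 2 * b1 - b3 - b4)%:~R / 6%:R) ((- 2 * a1 + b3 + b4)%:~R / 6%:R)
       ((- 2 * b1 - b3 - b4)%:~R / 6%:R) ((- 2 * a2 + 2 * b2 - b3 + b4)%:~R / 6%:R)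
       ((- 2 * a2 + b3 - b4)%:~R / 6%:R) ((- 2 * b2 - b3 + b4)%:~R / 6%:R)
       ((- 2 * a3 + b3 + 2 * a4 - b4)%:~R / 6%:R) ((- 2 * a3 + b3 - 2 * a4 + b4)%:~R / 6%:R).

Lemma toR8_eis_mul_M_E8 a1 b1 a2 b2 a3 b3 a4 b4 :
  toR8 (vec4 (eis a1 b1) (eis a2 b2) (eis a3 b3) (eis a4 b4)) *m M_E8 =
  E8_coords a1 b1 a2 b2 a3 b3 a4 b4.
Proof.
apply/rowP => j; rewrite !mxE !big_ord_recr big_ord0 /= !mxE /= !inordK //=.
rewrite !Re_eis !Im_eis.
by case: j => [[|[|[|[|[|[|[|[|]]]]]]]]] //= _; rewrite /Q8 /=; fld.
Qed.

Lemma espanT_E8 v : espan T v -> E8 (toR8 v *m M_E8).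
Proof.
rewrite /T /fam4 => /espan_fam4 [f0 [f1 [f2 [f3 [E0 E1 E2 E3 ->]]]]].
case/is_eisP: E0 => p0 [q0 ->]; case/is_eisP: E1 => p1 [q1 ->].
case/is_eisP: E2 => p2 [q2 ->]; case/is_eisP: E3 => p3 [q3 ->].
eis_coords; rewrite toR8_eis_mul_M_E8 /E8_coords.
have [t [h [h01 ->]]] := int_even_odd q2.
apply/E8P; exists h, (p0 - q0 + t), (p0 + t), (q0 - p2 + t), (p1 - q1 + p3 + t),
  (p1 - p3 + q3 + t), (q1 - p2 + t), (t - q3), t, (p0 + p1 - p2 + 2 * (2 * t + h)).
by split=> //; [congr row8; fld | lia].
Qed.

Lemma E8_espanT y : E8 y -> exists v, espan T v /\ y = toR8 v *m M_E8.
Proof.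
case/E8P=> h [z0 [z1 [z2 [z3 [z4 [z5 [z6 [z7 [m [_ y_eq sum_z]]]]]]]]]].
have z7_eq : z7 = 2 * m - 4 * h - (z0 + z1 + z2 + z3 + z4 + z5 + z6) by lia.
(* One witness serves both cosets: the [T]-coordinates of the preimage are
   affine in the coset indicator [h]. *)
pose f0 := eis (z0 + 2 * z1 + z2 + z3 + z4 + z5 + z6 - 2 * m + 4 * h) (z1 - z0).
pose f1 := eis (z0 + 2 * z1 + z2 + 2 * z3 + 2 * z4 + 2 * z5 + 2 * z6 - 3 * m + 6 * h)
               (z1 - z0 - z2 + z5).
pose f2 := eis (2 * m - 2 * z0 - 2 * z2 - z3 - z4 - z5 - z6 - 4 * h)
               (4 * m - 2 * (z0 + z1 + z2 + z3 + z4 + z5 + z6) - 7 * h).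
pose f3 := eis (m - z0 - z2 - z4 - z6 - 2 * h)
               (2 * m - z0 - z1 - z2 - z3 - z4 - z5 - 2 * z6 - 4 * h).
exists (f0 *: (theta *: vec4 theta 0 0 0) + f1 *: (theta *: vec4 0 theta 0 0)
        + f2 *: (theta *: vec4 1 1 1 0) + f3 *: (theta *: vec4 0 1 (-1) 1)); split.
  by apply/espan_fam4; exists f0, f1, f2, f3; split; rewrite /f0 /f1 /f2 /f3 //; apply: is_eis_eis.
rewrite /f0 /f1 /f2 /f3; eis_coords.
by rewrite y_eq z7_eq toR8_eis_mul_M_E8 /E8_coords; congr row8; fld.
Qed.

Theorem mainTheorem5 :
  (forall v : 'rV[algC]_4,
      (forall k, (1 <= k <= 10)%N -> Lam k v) <-> (Lam 1 v /\ Lam 2 v)) /\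
  (forall v : 'rV[algC]_4, (Lam 1 v /\ Lam 2 v) <-> espan T v) /\
  similar_to_E8 (fun v => Lam 1 v /\ Lam 2 v).
Proof.
have Lam12_espanT v : Lam 1 v /\ Lam 2 v <-> espan T v.
  split=> [[]|espanT_v]; first exact: Lam1_Lam2_espanT.
  by split; apply: espan_trans espanT_v; apply: T_in_Lam.
split.
  move=> v; split=> [Lam_v|/Lam12_espanT espanT_v k k_range]; first by split; apply: Lam_v.
  exact: espan_trans (T_in_Lam k_range) espanT_v.
split=> //; exists M_E8, (2%:R / 9%:R).
split; first exact: M_E8_real.
split; first by rewrite divr_gt0 ?ltr0n.
split; first exact: M_E8_mul_tr.
move=> y; split=> [/E8_espanT [v [/Lam12_espanT Lam12_v ->]]|[v [/Lam12_espanT espanT_v ->]]].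
  by exists v.
exact: espanT_E8.
Qed.
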